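(* For all integers $n,k,d$ with $2\le k\le d<n$, there exists a directed graph $G$ on $\{D\}\cup[n]$ that satisfies the $d$-propagating-dealer property and satisfies $$\Gamma_{\text{sota}}(G)\ge\frac{n(n+1)}{4d}.$$
   Context: $G$ is a directed graph on $\{D\}\cup[n]$, $D$ the dealer, $[n]$ the participants; $\mathcal N(D)$ is the set of out-neighbours of $D$. $G$ satisfies the $d$-propagating-dealer property if there is an ordering of the $n$ participants such that every participant either has an incoming edge from $D$ or has incoming edges from at least $d$ participants preceding it in the ordering. For a participant $i$ and integer $w\ge k$, let $\ell_w(D\to i)$ be the minimum, over all families of $w$ internally vertex-disjoint directed paths from $D$ to $i$, of the average length (number of edges) of the paths in the family, with $\ell_w(D\to i)=\infty$ if no such family exists. The communication complexity of the state-of-the-art (separate secure transmissions) scheme is $$\Gamma_{\text{sota}}(G)=|\mathcal N(D)|+\sum_{i\notin\mathcal N(D)}\min_{w\ge k}\Big[\frac{w}{w-k+1}\,\ell_w(D\to i)\Big].$$ *)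

From HB Require Import structures.
From mathcomp Require Import all_boot all_order all_algebra.
Set Implicit Arguments. Unset Strict Implicit. Unset Printing Implicit Defensive.
Import Order.TTheory GRing.Theory Num.Theory.

(* Vertex set {D} ∪ [n] is encoded as 'I_n.+1 : vertex 0 is the dealer D,
   vertices 1..n are the participants.  A directed graph is a relation
   e : rel 'I_n.+1 (e u v = there is an edge u -> v). *)

Definition dealer {n : nat} : 'I_n.+1 := ord0.

Definition participants (n : nat) : seq 'I_n.+1 :=
  [seq i <- enum 'I_n.+1 | i != dealer].

Definition loopless (n : nat) (e : rel 'I_n.+1) : Prop :=
  forall x, ~~ e x x.

Definition propagating_dealer (n d : nat) (e : rel 'I_n.+1) : Prop :=
  exists ord : seq 'I_n.+1,
    perm_eq ord (participants n) /\
    forall j, j < size ord ->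
      e dealer (nth dealer ord j) ||
      (d <= count (fun u => e u (nth dealer ord j)) (take j ord)).

(* A directed simple path from D to i, described by its sequence p of internal
   vertices: D -> p_1 -> ... -> p_m -> i.  Its length (number of edges) is
   size p + 1. *)
Definition DPath (n : nat) (e : rel 'I_n.+1) (i : 'I_n.+1) (p : seq 'I_n.+1) : bool :=
  path e dealer (rcons p i) && uniq (dealer :: rcons p i).

Definition path_length (n : nat) (p : seq 'I_n.+1) : nat := (size p).+1.

Definition disjoint_family (n : nat) (e : rel 'I_n.+1) (i : 'I_n.+1)
    (F : seq (seq 'I_n.+1)) : bool :=
  all (DPath e i) F && uniq F &&
  pairwise (fun p q : seq 'I_n.+1 => ~~ has (fun x => x \in q) p) F.

Definition avg_length (n : nat) (F : seq (seq 'I_n.+1)) : rat :=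
  ((\sum_(p <- F) path_length p)%:R / (size F)%:R)%R.

Definition family_cost (n k : nat) (F : seq (seq 'I_n.+1)) : rat :=
  (((size F)%:R / ((size F)%:R - k%:R + 1)) * avg_length F)%R.

(* c is one of the values w/(w-k+1) * avg_length(F) over families F of
   w >= k internally vertex-disjoint D -> i paths.  The term
   min_{w>=k} [w/(w-k+1) * l_w(D->i)] of Gamma_sota is the minimum of this
   (finite) set of values, and is +infinity when the set is empty. *)
Definition achievable_cost (n k : nat) (e : rel 'I_n.+1) (i : 'I_n.+1) (c : rat) : Prop :=
  exists F : seq (seq 'I_n.+1),
    k <= size F /\ disjoint_family e i F /\ c = family_cost k F.

Definition dealer_nbrs (n : nat) (e : rel 'I_n.+1) : {set 'I_n.+1} :=
  [set i | (i != dealer) && e dealer i].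

(* Since every set of achievable costs is finite, its
   minimum (when it exists) is achieved; hence Gamma_sota(G) >= B iff every
   choice of an achievable cost c i for each participant i outside N(D)
   gives |N(D)| + sum_i c i >= B (vacuous if some term is +infinity). *)
Definition gamma_sota_ge (n k : nat) (e : rel 'I_n.+1) (B : rat) : Prop :=
  forall c : 'I_n.+1 -> rat,
    (forall i, i != dealer -> ~~ e dealer i -> achievable_cost k e i (c i)) ->
    (B <= #|dealer_nbrs e|%:R +
          \sum_(i | (i != dealer) && ~~ e dealer i) c i)%R.

(* Take the band graph in which u -> v whenever u < v <= u + d.  Participants
   1..d hear the dealer and every later participant j hears j-d, ..., j-1, so
   the graph is d-propagating.  An edge raises the label by at most d, hence
   every D -> i path has length at least i/d; as w/(w-k+1) >= 1, each term of
   Gamma_sota is at least i/d, and so is the term 1 of each i <= d in N(D).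
   Summing, Gamma_sota >= n(n+1)/(2d). *)
From HB Require Import structures.
From mathcomp Require Import all_boot all_order all_algebra.
From mathcomp Require Import zify lra.
Import Order.TTheory GRing.Theory Num.Theory.

Lemma path_last_le {T : Type} {e : rel T} {f : T -> nat} {d : nat} {x p} :
  (forall u v, e u v -> f v <= f u + d) ->
  path e x p -> f (last x p) <= f x + d * size p.
Proof.
move=> step; elim: p x => [|y p IH] x /=; first by rewrite muln0 addn0.
move=> /andP [exy pyp]; apply: (leq_trans (IH y pyp)).
by rewrite mulnS addnA leq_add2r step.
Qed.

Lemma sum_ord_double n : (\sum_(i < n.+1) (i : nat)) * 2 = n * n.+1.
Proof.
elim: n => [|n IH]; first by rewrite big_ord_recr big_ord0.
by rewrite big_ord_recr /= mulnDl IH; lia.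
Qed.

Lemma map_val_participants n : map val (participants n) = iota 1 n.
Proof.
rewrite /participants enum_ordSl /=.
rewrite (@eq_in_filter _ _ predT) ?filter_predT; last first.
  by move=> _ /mapP [y _ ->]; rewrite eq_sym neq_lift.
rewrite -map_comp (@eq_map _ _ _ (addn 1 \o val)) //.
by rewrite map_comp val_enum_ord -iotaDl.
Qed.

Lemma size_participants n : size (participants n) = n.
Proof. by rewrite -(size_map val) map_val_participants size_iota. Qed.

Lemma nth_participants n j :
  j < n -> val (nth dealer (participants n) j) = j.+1.
Proof.
move=> ltjn; rewrite -(nth_map dealer 0) ?size_participants //.
by rewrite map_val_participants nth_iota.
Qed.

Lemma gamma_sota_ge_le {n k} {e : rel 'I_n.+1} {B B' : rat} :
  (B' <= B)%R -> gamma_sota_ge k e B -> gamma_sota_ge k e B'.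
Proof. by move=> leB' geB c hc; apply: le_trans leB' (geB c hc). Qed.

Lemma avg_length_le_family_cost n k (F : seq (seq 'I_n.+1)) :
  0 < k <= size F -> (avg_length F <= family_cost k F)%R.
Proof.
case/andP=> k_gt0 leqkF; rewrite /family_cost /avg_length.
set W := (size F)%:R : rat; set S := (\sum_(p <- F) _)%:R : rat.
have W_ge_k : ((k%:R : rat) <= W)%R by rewrite ler_nat.
have k_ge1 : ((1 : rat) <= k%:R)%R by rewrite ler1n.
have S_ge0 : ((0 : rat) <= S / W)%R by rewrite divr_ge0 ?ler0n.
apply: ler_peMl => //; rewrite ler_pdivlMr; lra.
Qed.

Section BandGraph.

Variables n d : nat.

Definition band : rel 'I_n.+1 := fun u v => (val u < val v) && (val v <= val u + d).

Lemma band_loopless : loopless band.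
Proof. by move=> x; rewrite /band ltnn. Qed.

Lemma band_propagating_dealer : propagating_dealer d band.
Proof.
exists (participants n); split=> // j; rewrite size_participants => ltjn.
rewrite /band nth_participants //=.
have [//|ltdj] := leqP j.+1 d; apply/orP; right.
rewrite -(count_map val (fun m => (m < j.+1) && (j.+1 <= m + d))).
rewrite map_take map_val_participants take_iota (minn_idPl (ltnW ltjn)).
have -> : j = (j - d) + d by lia.
have window : all (fun m => (m < (j - d + d).+1) && ((j - d + d).+1 <= m + d))
                  (iota (1 + (j - d)) d).
  by apply/allP => m; rewrite mem_iota => /andP [? ?]; apply/andP; lia.
by move: window; rewrite all_count iotaD count_cat size_iota => /eqP ->; rewrite leq_addl.
Qed.

Lemma band_DPath_length (i : 'I_n.+1) p :
  DPath band i p -> val i <= d * path_length p.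
Proof.
case/andP=> Dpath _; have step (u v : 'I_n.+1) : band u v -> val v <= val u + d.
  by case/andP.
by have := path_last_le step Dpath; rewrite last_rcons size_rcons.
Qed.

Lemma band_avg_length {i : 'I_n.+1} {F : seq (seq 'I_n.+1)} :
  0 < size F -> all (DPath band i) F ->
  ((val i)%:R <= d%:R * avg_length F :> rat)%R.
Proof.
move=> F_gt0 DpathsF; rewrite /avg_length mulrA ler_pdivlMr ?ltr0n //.
rewrite -!natrM ler_nat -iter_addn_0 -count_predT -big_const_seq big_distrr.
rewrite big_seq [leqRHS]big_seq; apply: leq_sum => p pF.
exact: band_DPath_length (allP DpathsF p pF).
Qed.

Lemma band_achievable_cost k (i : 'I_n.+1) c :
  0 < k -> achievable_cost k band i c -> ((val i)%:R <= d%:R * c :> rat)%R.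
Proof.
move=> k_gt0 [F [leqkF [/andP [/andP [DpathsF _] _] ->]]].
apply: le_trans (band_avg_length (leq_trans k_gt0 leqkF) DpathsF) _.
by rewrite ler_wpM2l // avg_length_le_family_cost // k_gt0.
Qed.

Lemma band_gamma_sota_ge k :
  0 < k -> 0 < d -> gamma_sota_ge k band ((n * n.+1)%:R / (2 * d)%:R)%R.
Proof.
move=> k_gt0 d_gt0 c cost_c.
have -> : (#|dealer_nbrs band|%:R =
          \sum_(i | (i != dealer) && band dealer i) 1 :> rat)%R.
  by rewrite -sum1_card natr_sum; apply: eq_bigl => i; rewrite inE.
rewrite ler_pdivrMr ?ltr0n ?muln_gt0 // -sum_ord_double natrM.
rewrite [(2 * d)%:R%R]natrM mulrCA [leRHS]mulrC ler_pM2r ?ltr0n //.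
rewrite mulrC natr_sum (bigD1 ord0) //= add0r.
rewrite (bigID (band dealer)) /= mulrDr !mulr_sumr.
apply: lerD; apply: ler_sum => i /andP [i_neq0 Di].
- by rewrite mulr1 ler_nat; case/andP: Di.
- exact: band_achievable_cost k_gt0 (cost_c i i_neq0 Di).
Qed.

End BandGraph.

Theorem mainTheorem9 (n k d : nat) :
  2 <= k -> k <= d -> d < n ->
  exists e : rel 'I_n.+1,
    loopless e /\ propagating_dealer d e /\
    gamma_sota_ge k e (((n * n.+1)%:R / (4 * d)%:R)%R : rat).
Proof.
move=> /ltnW k_gt0 lekd _; have d_gt0 : 0 < d := leq_trans k_gt0 lekd.
exists (band n d); split; [exact: band_loopless | split].
  exact: band_propagating_dealer.
apply: (gamma_sota_ge_le _ (band_gamma_sota_ge n d k k_gt0 d_gt0)).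
rewrite ler_wpM2l ?ler0n // lef_pV2 ?posrE ?ltr0n ?muln_gt0 ?d_gt0 //.
by rewrite ler_nat leq_pmul2r.
Qed.
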